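(* Let $\mathcal{X}=\{a_1,\dots,a_n\}$, $\mathcal{Z}=\{b_1,\dots,b_m\}$ be finite and let $\mathcal{Y}=\{c_1,\dots,c_K\}$ be the set of distinct values of $h$. Let $A$ be the $n\times K$ matrix with $A(i,j)=Q(\{z: h(a_i,z)=c_j\})=P(Y_k=c_j\mid X_k=a_i)$, let $T$ be the $n\times n$ transition matrix of the state chain, and let $M=\begin{pmatrix}A & TA & \cdots & T^{n-1}A\end{pmatrix}$, an $n\times nK$ matrix. If $M$ has rank $n$, then the model is $n$ step observable. Furthermore, if $M$ does not have rank $n$, then appending further blocks $T^kA$ with $k\ge n$ to $M$ does not increase its rank.
   Context: Setting: finite state space $\mathcal{X}$, finite noise space $\mathcal{Z}$ with noise law $Q$ (a probability vector), measurement function $h:\mathcal{X}\times\mathcal{Z}\to\mathcal{Y}$. $\{X_k\}$ is a Markov chain with transition matrix $T$, $\{Z_k\}$ i.i.d. with law $Q$ independent of the states, and $Y_k=h(X_k,Z_k)$. For $N\in\mathbb{N}$ let $P(dy_{[1,N]}\mid X_1=x)$ be the conditional law of $(Y_1,\dots,Y_N)$ given $X_1=x$. The model is $N$ step observable if for every function $f:\mathcal{X}\to\mathbb{R}$ and $\epsilon>0$ there is $g:\mathcal{Y}^N\to\mathbb{R}$ with $\max_{x}\left|f(x)-\sum_{y_{[1,N]}}g(y_{[1,N]})P(y_{[1,N]}\mid X_1=x)\right|<\epsilon$. *)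

From HB Require Import structures.
From mathcomp Require Import all_boot all_order all_algebra.
From mathcomp Require Import reals.
Set Implicit Arguments. Unset Strict Implicit. Unset Printing Implicit Defensive.
Import Order.TTheory GRing.Theory Num.Theory.
Local Open Scope ring_scope.

Definition emis (R : realType) (n : nat) (Z Y : finType) (Q : Z -> R)
  (h : 'I_n -> Z -> Y) (x : 'I_n) (y : Y) : R :=
  \sum_(z : Z | h x z == y) Q z.

(* Conditional law of (Y_1,...,Y_N) given X_1 = x, for the Markov chain with
   transition matrix T (T x x' = P(X_{k+1} = x' | X_k = x)). Index i : 'I_N
   corresponds to time i+1. *)
Definition condlaw (R : realType) (n : nat) (Z Y : finType) (T : 'M[R]_n)
  (Q : Z -> R) (h : 'I_n -> Z -> Y) (N : nat) (x : 'I_n)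
  (y : {ffun 'I_N -> Y}) : R :=
  \sum_(xs : {ffun 'I_N -> 'I_n} | [forall i : 'I_N, (val i == 0%N) ==> (xs i == x)])
    ((\prod_(i : 'I_N) \prod_(j : 'I_N | val j == i.+1) T (xs i) (xs j))
     * \prod_(i : 'I_N) emis Q h (xs i) (y i)).
Arguments condlaw {R n Z Y} T Q h N x y.

Definition n_step_observable (R : realType) (n : nat) (Z Y : finType)
  (T : 'M[R]_n) (Q : Z -> R) (h : 'I_n -> Z -> Y) (N : nat) : Prop :=
  forall (f : 'I_n -> R) (eps : R), 0 < eps ->
    exists g : {ffun 'I_N -> Y} -> R,
      forall x : 'I_n,
        `| f x - \sum_(y : {ffun 'I_N -> Y}) g y * condlaw T Q h N x y | < eps.

Definition Amx (R : realType) (n : nat) (Z Y : finType) (Q : Z -> R)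
  (h : 'I_n -> Z -> Y) : 'M[R]_(n, #|Y|) :=
  \matrix_(i < n, j < #|Y|) emis Q h i (enum_val j).

Definition Mblk (R : realType) (n : nat) (Z Y : finType) (T : 'M[R]_n)
  (Q : Z -> R) (h : 'I_n -> Z -> Y) (N : nat) :
  'M[R]_(n, \sum_(k < N) #|Y|) :=
  \mxrow_(k < N) (T ^+ k *m Amx Q h).

From HB Require Import structures.
From mathcomp Require Import all_boot all_order all_algebra.
From mathcomp Require Import reals.
Set Implicit Arguments. Unset Strict Implicit. Unset Printing Implicit Defensive.
Import Order.TTheory GRing.Theory Num.Theory.
Local Open Scope ring_scope.

(* Conditioning on X_1 = x and summing out the state path and the unobserved
   outputs gives E[1{Y_(k+1) = c} | X_1 = x] = (T^k A)(x, c): every column of M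
   is the vector of conditional expectations of an indicator function of the
   observations.  If M has rank n, every f : X -> R is a linear combination of
   these columns, hence an exact conditional expectation.  By Cayley-Hamilton
   every T^k is a linear combination of 1, T, ..., T^(n-1), so the column space
   of the blocks T^k A does not grow beyond k = n - 1. *)

Section FfunCons.
Variables (S : finType) (V : nmodType).

Definition ffun_cons N (a : S) (t : {ffun 'I_N -> S}) : {ffun 'I_N.+1 -> S} :=
  [ffun i => if unlift ord0 i is Some j then t j else a].

Lemma ffun_cons0 N a (t : {ffun 'I_N -> S}) : ffun_cons a t ord0 = a.
Proof. by rewrite ffunE unlift_none. Qed.

Lemma ffun_consS N a (t : {ffun 'I_N -> S}) j : ffun_cons a t (lift ord0 j) = t j.
Proof. by rewrite ffunE liftK. Qed.

Lemma big_ffun_cons N (F : {ffun 'I_N.+1 -> S} -> V) :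
  \sum_f F f = \sum_a \sum_(t : {ffun 'I_N -> S}) F (ffun_cons a t).
Proof.
rewrite pair_big /= (reindex (fun p : S * {ffun 'I_N -> S} => ffun_cons p.1 p.2)) //=.
exists (fun f : {ffun 'I_N.+1 -> S} => (f ord0, [ffun j => f (lift ord0 j)])).
  move=> [a t] _ /=; rewrite ffun_cons0; congr pair.
  by apply/ffunP => j; rewrite ffunE ffun_consS.
move=> f _; apply/ffunP => i; rewrite !ffunE.
by case: unliftP => [j ->|->]; rewrite ?ffunE.
Qed.

Lemma big_ffun_cons_head N x (F : {ffun 'I_N.+1 -> S} -> V) :
  \sum_(f : {ffun 'I_N.+1 -> S} | f ord0 == x) F f
  = \sum_(t : {ffun 'I_N -> S}) F (ffun_cons x t).
Proof.
rewrite big_mkcond big_ffun_cons (bigD1 x) //= [X in _ + X]big1 ?addr0.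
  by apply: eq_bigr => t _; rewrite ffun_cons0 eqxx.
by move=> a /negbTE ha; apply: big1 => t _; rewrite ffun_cons0 ha.
Qed.

Lemma forall_ord0_eq N x (f : {ffun 'I_N.+1 -> S}) :
  [forall i : 'I_N.+1, (val i == 0%N) ==> (f i == x)] = (f ord0 == x).
Proof.
apply/forallP/idP => [/(_ ord0) // | fx i]; apply/implyP => /eqP i0.
by have -> : i = ord0 by apply: val_inj.
Qed.

End FfunCons.

Section PathWeight.
Variables (R : comPzRingType) (n : nat) (T : 'M[R]_n).

(* The inner product has the single factor j = i + 1 when i + 1 < N; this is
   the shape of the path weight inside [condlaw]. *)
Definition path_weight N (xs : {ffun 'I_N -> 'I_n}) : R :=
  \prod_(i : 'I_N) \prod_(j : 'I_N | val j == i.+1) T (xs i) (xs j).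

Lemma prod_val_eqS N i (F : 'I_N.+1 -> R) :
  \prod_(j : 'I_N.+1 | val j == i.+1) F j = \prod_(j : 'I_N | val j == i) F (lift ord0 j).
Proof.
rewrite big_mkcond big_ord_recl [RHS]big_mkcond /= mul1r.
by apply: eq_bigr => j _; rewrite /bump leq0n add1n eqSS.
Qed.

Lemma path_weight1 (xs : {ffun 'I_1 -> 'I_n}) : path_weight xs = 1.
Proof. by rewrite /path_weight big_ord1 prod_val_eqS big_ord0. Qed.

Lemma path_weight_cons N a (t : {ffun 'I_N.+1 -> 'I_n}) :
  path_weight (ffun_cons a t) = T a (t ord0) * path_weight t.
Proof.
rewrite /path_weight big_ord_recl ffun_cons0 prod_val_eqS; congr (_ * _).
  by rewrite (big_pred1 ord0) ?ffun_consS.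
apply: eq_bigr => i _; rewrite lift0 prod_val_eqS.
by apply: eq_bigr => j _; rewrite !ffun_consS.
Qed.

Hypothesis T_row_sum1 : forall i, \sum_j T i j = 1.

Lemma sum_path_weight N x :
  \sum_(xs : {ffun 'I_N.+1 -> 'I_n} | xs ord0 == x) path_weight xs = 1.
Proof.
elim: N x => [|N IH] x; rewrite big_ffun_cons_head.
  rewrite (eq_bigr (fun _ => 1)) => [|t _]; last exact: path_weight1.
  by rewrite sumr_const card_ffun !card_ord expn0.
under eq_bigr do rewrite path_weight_cons.
rewrite (partition_big (fun t : {ffun 'I_N.+1 -> 'I_n} => t ord0) predT) //=.
rewrite -(T_row_sum1 x); apply: eq_bigr => w _.
transitivity (T x w * \sum_(t : {ffun 'I_N.+1 -> 'I_n} | t ord0 == w) path_weight t).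
  by rewrite mulr_sumr; apply: eq_bigr => t /eqP ->.
by rewrite IH mulr1.
Qed.

Lemma sum_path_weight_head N x (F : 'I_n -> R) :
  \sum_(xs : {ffun 'I_N.+1 -> 'I_n} | xs ord0 == x) path_weight xs * F (xs ord0) = F x.
Proof.
rewrite (eq_bigr (fun xs => path_weight xs * F x)) => [|xs /eqP -> //].
by rewrite -mulr_suml sum_path_weight mul1r.
Qed.

Lemma sum_path_weight_mxE N x (k : 'I_N.+1) m (G : 'M[R]_(n, m)) c :
  \sum_(xs : {ffun 'I_N.+1 -> 'I_n} | xs ord0 == x) path_weight xs * G (xs k) c
  = (T ^+ k *m G) x c.
Proof.
elim: N x k => [|N IH] x k; case: (unliftP ord0 k) => [j ->|->];
  rewrite ?expr0 ?mul1mx ?(sum_path_weight_head _ _ (fun v => G v c)) //; first by case: j.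
rewrite big_ffun_cons_head lift0 exprS -mulmxE -mulmxA mxE.
under eq_bigr do rewrite path_weight_cons ffun_consS.
rewrite (partition_big (fun t : {ffun 'I_N.+1 -> 'I_n} => t ord0) predT) //=.
apply: eq_bigr => w _; rewrite -IH mulr_sumr.
by apply: eq_bigr => t /eqP ->; rewrite mulrA.
Qed.

End PathWeight.

Lemma sum_indicator_prod_ffun (R : comPzRingType) (I Y : finType) (E : I -> Y -> R)
    (k : I) (c : Y) :
  (forall i, \sum_v E i v = 1) ->
  \sum_(y : {ffun I -> Y}) (y k == c)%:R * \prod_i E i (y i) = E k c.
Proof.
move=> E_sum1; pose F i v := if i == k then (v == c)%:R * E i v else E i v.
transitivity (\sum_(y : {ffun I -> Y}) \prod_i F i (y i)).
  apply: eq_bigr => y _; rewrite (bigD1 k) // [RHS](bigD1 k) //= /F eqxx mulrA.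
  by congr (_ * _); apply: eq_bigr => i /negbTE ->.
rewrite -bigA_distr_bigA (bigD1 k) //= [X in _ * X]big1 => [|i /negbTE ki]; last first.
  by rewrite /F ki.
rewrite /F eqxx mulr1 (bigD1 c) //= eqxx mul1r big1 ?addr0 // => v /negbTE ->.
by rewrite mul0r.
Qed.

Lemma full_row_rank_solve (F : fieldType) m p (M : 'M[F]_(m, p)) :
  \rank M = m -> forall b : 'cV_m, exists x : 'cV_p, M *m x = b.
Proof.
move=> rankM b; have fullMt : row_full M^T by rewrite /row_full mxrank_tr rankM.
exists (b^T *m pinvmx M^T)^T; apply: trmx_inj.
by rewrite trmx_mul !trmxK mulmxKpV // submx_full.
Qed.

Section Observation.
Variables (R : realType) (n : nat) (Z Y : finType) (T : 'M[R]_n).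
Variables (Q : Z -> R) (h : 'I_n -> Z -> Y).
Hypotheses (Q_sum1 : \sum_z Q z = 1) (T_row_sum1 : forall i, \sum_j T i j = 1).

Lemma sum_emis w : \sum_v emis Q h w v = 1.
Proof. by rewrite -Q_sum1 (partition_big (h w) predT). Qed.

Lemma condlaw_marginal N x (k : 'I_N) (j : 'I_#|Y|) :
  \sum_(y : {ffun 'I_N -> Y}) (y k == enum_val j)%:R * condlaw T Q h N x y
  = (T ^+ k *m Amx Q h) x j.
Proof.
case: N k => [[] //|N] k; rewrite -sum_path_weight_mxE // /condlaw.
under eq_bigr do rewrite mulr_sumr.
rewrite exchange_big /=; under eq_bigl do rewrite forall_ord0_eq.
apply: eq_bigr => xs _; rewrite mxE.
under eq_bigr do rewrite mulrCA.
by rewrite -mulr_sumr (sum_indicator_prod_ffun _ _ (fun i => sum_emis (xs i))).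
Qed.

Lemma Mblk_expectation N x c :
  Mblk T Q h N x c
  = \sum_(y : {ffun 'I_N -> Y})
      (y (tagnat.sig1 c) == enum_val (tagnat.sig2 c))%:R * condlaw T Q h N x y.
Proof. by rewrite condlaw_marginal /Mblk /mxrow !mxE. Qed.

Lemma observable_of_full_rank N :
  \rank (Mblk T Q h N) = n -> n_step_observable T Q h N.
Proof.
move=> rankM f eps eps_gt0; have [v Mv] := full_row_rank_solve rankM (\col_x f x).
pose g (y : {ffun 'I_N -> Y}) :=
  \sum_c v c 0 * (y (tagnat.sig1 c) == enum_val (tagnat.sig2 c))%:R.
exists g => x; suff -> : \sum_y g y * condlaw T Q h N x y = f x by rewrite subrr normr0.
have := congr1 (fun b : 'cV[R]_n => b x 0) Mv; rewrite /= !mxE => <-.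
under eq_bigr do rewrite mulr_suml.
rewrite exchange_big; apply: eq_bigr => c _.
rewrite Mblk_expectation mulr_suml; apply: eq_bigr => y _.
by rewrite -mulrA mulrC.
Qed.

End Observation.

Lemma mxpow_lin_comb (F : fieldType) n (A : 'M[F]_n.+1) k :
  exists c : 'I_n.+1 -> F, A ^+ k = \sum_(i < n.+1) c i *: A ^+ i.
Proof.
pose r := 'X^k %% char_poly A; exists (fun i => r`_i).
have size_r : (size r <= n.+1)%N.
  by rewrite -ltnS -(size_char_poly A) ltn_modp -size_poly_eq0 size_char_poly.
have -> : A ^+ k = horner_mx A r.
  rewrite -{1}(horner_mx_X A) -rmorphXn /= {1}(divp_eq 'X^k (char_poly A)).
  by rewrite rmorphD rmorphM /= Cayley_Hamilton mulr0 add0r.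
have r_eq : r = \poly_(i < n.+1) r`_i.
  apply/polyP => i; rewrite coef_poly; case: ltnP => // /(leq_trans size_r).
  exact: nth_default.
rewrite {1}r_eq poly_def linear_sum /=; apply: eq_bigr => i _.
by rewrite linearZ /= rmorphXn /= horner_mx_X.
Qed.

Lemma krylov_sumsmx_stable (F : fieldType) n m (A : 'M[F]_n.+1) (B : 'M[F]_(n.+1, m)) N :
  (n.+1 <= N)%N ->
  (\sum_(i < N) <<(A ^+ i *m B)^T>> == \sum_(i < n.+1) <<(A ^+ i *m B)^T>>)%MS.
Proof.
move=> le_nN; apply/andP; split; apply/sumsmx_subP => i _; last first.
  by rewrite (sumsmx_sup (widen_ord le_nN i)).
have [c ->] := mxpow_lin_comb A i.
rewrite genmxE mulmx_suml linear_sum /=; apply/summx_sub => j _.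
by rewrite -scalemxAl linearZ /= scalemx_sub // (sumsmx_sup j) // genmxE.
Qed.

Lemma mxrank_mxrow (F : fieldType) m N (p_ : 'I_N -> nat) (B_ : forall i, 'M[F]_(m, p_ i)) :
  \rank (\mxrow_i B_ i) = \rank (\sum_i <<(B_ i)^T>>)%MS.
Proof. by rewrite -mxrank_tr tr_mxrow; apply/eqmx_rank/eqmxP; exact: eqmx_col. Qed.

Lemma mxrank_krylov_stable (F : fieldType) n m (A : 'M[F]_n) (B : 'M[F]_(n, m)) N :
  (n <= N)%N -> \rank (\mxrow_(i < N) (A ^+ i *m B)) = \rank (\mxrow_(i < n) (A ^+ i *m B)).
Proof.
case: n A B => [|n] A B le_nN; first by rewrite !flatmx0 !mxrank0.
by rewrite !mxrank_mxrow; apply/eqmx_rank/krylov_sumsmx_stable.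
Qed.

Theorem lemma1 (R : realType) (n : nat) (Z Y : finType) (T : 'M[R]_n)
  (Q : Z -> R) (h : 'I_n -> Z -> Y)
  (HQ0 : forall z, 0 <= Q z) (HQ1 : \sum_(z : Z) Q z = 1)
  (HT0 : forall i j, 0 <= T i j) (HT1 : forall i, \sum_(j < n) T i j = 1) :
  (\rank (Mblk T Q h n) = n -> n_step_observable T Q h n) /\
  (\rank (Mblk T Q h n) <> n ->
     forall N : nat, (n <= N)%N -> \rank (Mblk T Q h N) = \rank (Mblk T Q h n)).
Proof.
split; first exact: observable_of_full_rank.
by move=> _ N le_nN; apply: mxrank_krylov_stable.
Qed.
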